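(* Let $n\ge t+1$, $t\ge1$ and $s\ge2$. Then, as ideals of $S=K[x_1,\ldots,x_n]$, $$\bigl(I_t(L_{n-1})^s:u_{n-t+1}\bigr)+(x_{n-t})=\bigl(I_t(L_{n-t-1})^s,\,x_{n-t}\bigr).$$ In particular, if $n\le 2t$ then $I_t(L_{n-t-1})=0$ and the left-hand side equals $(x_{n-t})$.
   Context: $K$ is a field. For $1\le m\le n$ and $m\ge t$, $I_t(L_m)$ denotes the ideal of $S$ generated by $u_i=x_ix_{i+1}\cdots x_{i+t-1}$ for $i=1,\ldots,m-t+1$ (the $t$-path ideal of the line graph on $x_1,\ldots,x_m$); by convention $I_t(L_m)=0$ if $m<t$. Here $u_{n-t+1}=x_{n-t+1}\cdots x_n$. *)

From HB Require Import structures.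
From mathcomp Require Import all_boot all_algebra.
From mathcomp Require Import mpoly.
Set Implicit Arguments. Unset Strict Implicit. Unset Printing Implicit Defensive.
Import GRing.Theory.
Local Open Scope ring_scope.

Section Ideals.
Variable P : comNzRingType.

Definition ideal_gen (A : P -> Prop) : P -> Prop :=
  fun f => exists l : seq (P * P),
    (forall p, p \in l -> A p.2) /\ f = \sum_(p <- l) p.1 * p.2.

Definition ideal_sum (I J : P -> Prop) : P -> Prop :=
  ideal_gen (fun f => I f \/ J f).

Definition ideal_mul (I J : P -> Prop) : P -> Prop :=
  ideal_gen (fun f => exists a b, [/\ I a, J b & f = a * b]).

Fixpoint ideal_pow (I : P -> Prop) (s : nat) : P -> Prop :=
  match s with
  | 0 => ideal_gen (fun f => f = 1)
  | s'.+1 => ideal_mul (ideal_pow I s') I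
  end.

Definition ideal_colon (I : P -> Prop) (u : P) : P -> Prop :=
  fun f => I (f * u).

Definition ideal_princ (g : P) : P -> Prop := ideal_gen (fun f => f = g).

Definition ideal_eq (I J : P -> Prop) : Prop := forall f, I f <-> J f.
End Ideals.

Section PathIdeal.
Variables (K : fieldType) (n : nat).

(* the variable x_j of S = K[x_1,...,x_n] (1 <= j <= n); 0 outside that range *)
Definition xv (j : nat) : {mpoly K[n]} :=
  match @insub nat (fun k => (k < n)%N) _ j.-1 with
  | Some i => 'X_(i : 'I_n)
  | None => 0
  end.

Definition upath (t i : nat) : {mpoly K[n]} :=
  \prod_(i <= j < (i + t)%N) xv j.

(* I_t(L_m): generated by u_i, i = 1..m-t+1; no generators (zero ideal) if m < t *)
Definition pathI (t m : nat) : {mpoly K[n]} -> Prop :=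
  ideal_gen (fun f => exists2 i, (1 <= i <= m.+1 - t)%N & f = upath t i).
End PathIdeal.

(* Write J = I_t(L_{n-1}), L = I_t(L_{n-t-1}), u = u_{n-t+1} and x = x_{n-t}.
   The inclusion from right to left holds since L is contained in J.  Conversely,
   let a u lie in J^s and split a = a_0 + x b, where a_0 collects the terms of a
   not divisible by x.  The K-linear projection onto x-free monomials kills the
   generators of J involving x and commutes with multiplication by the other
   ones, which are the generators of L, and by u; hence a_0 u lies in L^s.
   Dividing by the monomial u, which shares no variable with the generators of
   L, gives a_0 in L^s.  When n <= 2t the ideal L has no generators at all. *)
From HB Require Import structures.
From mathcomp Require Import all_boot all_algebra.
From mathcomp Require Import mpoly zify.
Set Implicit Arguments. Unset Strict Implicit. Unset Printing Implicit Defensive.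
Local Open Scope ring_scope.
Import GRing.Theory.

Section IdealGen.
Variable P : comNzRingType.
Implicit Types (A B : P -> Prop) (I J : P -> Prop).

Lemma ideal_gen0 A : ideal_gen A 0.
Proof. by exists [::]; rewrite big_nil. Qed.

Lemma ideal_genD A f g : ideal_gen A f -> ideal_gen A g -> ideal_gen A (f + g).
Proof.
move=> [l1 [A1 ->]] [l2 [A2 ->]]; exists (l1 ++ l2); split; last by rewrite big_cat.
by move=> p; rewrite mem_cat => /orP [/A1|/A2].
Qed.

Lemma ideal_genMl A c f : ideal_gen A f -> ideal_gen A (c * f).
Proof.
move=> [l [Al ->]]; exists [seq (c * p.1, p.2) | p <- l]; split.
  by move=> p /mapP [q /Al Aq ->].
by rewrite big_map mulr_sumr; apply: eq_bigr => p _; rewrite mulrA.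
Qed.

Lemma ideal_gen_mem A a : A a -> ideal_gen A a.
Proof.
move=> Aa; exists [:: (1, a)]; split; last by rewrite big_seq1 mul1r.
by move=> p; rewrite inE => /eqP ->.
Qed.

Lemma ideal_gen_sum A (T : eqType) (r : seq T) (F : T -> P) :
  (forall x, x \in r -> ideal_gen A (F x)) -> ideal_gen A (\sum_(x <- r) F x).
Proof.
elim: r => [|x r IHr] AF; first by rewrite big_nil; apply: ideal_gen0.
rewrite big_cons; apply: ideal_genD; first by apply: AF; rewrite mem_head.
by apply: IHr => y ry; apply: AF; rewrite inE ry orbT.
Qed.

Lemma ideal_gen_sub A B f :
  (forall a, A a -> ideal_gen B a) -> ideal_gen A f -> ideal_gen B f.
Proof.
by move=> AB [l [Al ->]]; apply: ideal_gen_sum => p /Al Ap; apply/ideal_genMl/AB.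
Qed.

Lemma ideal_gen_eq0 A f : (forall a, A a -> a = 0) -> ideal_gen A f -> f = 0.
Proof.
by move=> A0 [l [Al ->]]; rewrite big1_seq // => p /andP [_ /Al /A0 ->]; rewrite mulr0.
Qed.

Lemma ideal_gen_additive (F : {additive P -> P}) A B f :
  (forall c a, A a -> ideal_gen B (F (c * a))) -> ideal_gen A f -> ideal_gen B (F f).
Proof.
by move=> FAB [l [Al ->]]; rewrite raddf_sum; apply: ideal_gen_sum => p /Al; apply: FAB.
Qed.

Lemma ideal_sum_meml I J f : I f -> ideal_sum I J f.
Proof. by move=> If; apply: ideal_gen_mem; left. Qed.

Lemma ideal_sum_memr I J f : J f -> ideal_sum I J f.
Proof. by move=> Jf; apply: ideal_gen_mem; right. Qed.

Lemma ideal_sum_subl I I' J f :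
  (forall g, I g -> ideal_sum I' J g) -> ideal_sum I J f -> ideal_sum I' J f.
Proof.
by move=> II'; apply: ideal_gen_sub => g [/II' //|]; apply: ideal_sum_memr.
Qed.

Lemma ideal_powMl I s c f : ideal_pow I s f -> ideal_pow I s (c * f).
Proof. by case: s => [|s]; apply: ideal_genMl. Qed.

Lemma ideal_pow0T I f : ideal_pow I 0 f.
Proof. by rewrite -[f]mulr1; apply/ideal_genMl/ideal_gen_mem. Qed.

Lemma ideal_powS_mul I s a b : ideal_pow I s a -> I b -> ideal_pow I s.+1 (a * b).
Proof. by move=> Ia Ib; apply: ideal_gen_mem; exists a, b. Qed.

Lemma ideal_pow_mono I J s f :
  (forall g, I g -> J g) -> ideal_pow I s f -> ideal_pow J s f.
Proof.
move=> IJ; elim: s f => [|s IHs] f //.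
apply: ideal_gen_sub => _ [a [b [Ia Ib ->]]].
by apply: ideal_powS_mul; [apply: IHs | apply: IJ].
Qed.

Lemma ideal_pow_eq0 I s f :
  (forall g, I g -> g = 0) -> (0 < s)%N -> ideal_pow I s f -> f = 0.
Proof.
by case: s => // s I0 _; apply: ideal_gen_eq0 => _ [a [b [_ /I0 -> ->]]]; rewrite mulr0.
Qed.

Lemma ideal_pow_sub_colon I s u f :
  ideal_pow I s f -> ideal_colon (ideal_pow I s) u f.
Proof. by rewrite /ideal_colon mulrC; apply: ideal_powMl. Qed.

Lemma ideal_powS_gen A s f :
  ideal_pow (ideal_gen A) s.+1 f ->
  ideal_gen (fun h => exists a g, [/\ ideal_pow (ideal_gen A) s a, A g & h = a * g]) f.
Proof.
apply: ideal_gen_sub => _ [a [_ [Ia [l [Al ->]]] ->]].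
rewrite mulr_sumr; apply: ideal_gen_sum => p /Al Ap.
rewrite mulrA; apply: ideal_gen_mem; exists (a * p.1), p.2; split => //.
by rewrite mulrC; apply: ideal_powMl.
Qed.

Lemma ideal_pow_additive (F : {additive P -> P}) A A' s f :
  (forall g, A g -> (ideal_gen A' g /\ forall c, F (c * g) = F c * g)
                    \/ (forall c, F (c * g) = 0)) ->
  ideal_pow (ideal_gen A) s f -> ideal_pow (ideal_gen A') s (F f).
Proof.
move=> FA; elim: s f => [|s IHs] f; first by move=> _; apply: ideal_pow0T.
move/ideal_powS_gen; apply: ideal_gen_additive => c _ [a [g [Ia Ag ->]]].
rewrite mulrA; have [[A'g ->]|->] := FA g Ag; last exact: ideal_gen0.
by apply: ideal_powS_mul A'g; apply/IHs/ideal_powMl.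
Qed.

End IdealGen.

Section MonomialOperators.
Variables (K : fieldType) (n : nat).
Local Notation S := {mpoly K[n]}.
Implicit Types (p c : S) (d w m k : 'X_{1..n}).

Lemma mcoeffMXE c w k : (c * 'X_[w])@_k = if (w <= k)%MM then c@_(k - w) else 0.
Proof.
case: ifP => [wk|wNk]; first by rewrite -{1}(submK wk) addmC mcoeffMX.
rewrite {1}(mpolyE c) mulr_suml raddf_sum /= big1 // => m _.
rewrite -scalerAl -mpolyXD mcoeffZ mcoeffX.
case: eqP => [mw_k|_]; last by rewrite mulr0.
by rewrite -mw_k lem_addl in wNk.
Qed.

Lemma sum_msupp_mcoeff p k : \sum_(m <- msupp p) p@_m * (m == k)%:R = p@_k.
Proof.
rewrite [in RHS](mpolyE p) raddf_sum /=.
by apply: eq_bigr => m _; rewrite mcoeffZ mcoeffX.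
Qed.

Definition mrestrict (P : pred 'X_{1..n}) p : S :=
  \sum_(m <- msupp p | P m) p@_m *: 'X_[m].

Lemma mcoeff_mrestrict P p k : (mrestrict P p)@_k = if P k then p@_k else 0.
Proof.
rewrite raddf_sum /= -sum_msupp_mcoeff big_mkcond /=.
case: ifP => Pk; last first.
  rewrite big1 // => m _; case: ifP => Pm //; rewrite mcoeffZ mcoeffX.
  case: eqP => [mk|_]; last by rewrite mulr0.
  by rewrite -mk Pm in Pk.
apply: eq_bigr => m _; case: ifP => Pm; first by rewrite mcoeffZ mcoeffX.
case: eqP => [mk|_]; last by rewrite mulr0.
by rewrite mk Pk in Pm.
Qed.

Definition mdivX d p : S := \sum_(m <- msupp p | (d <= m)%MM) p@_m *: 'X_[m - d].

Lemma mcoeff_mdivX d p k : (mdivX d p)@_k = p@_(k + d).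
Proof.
rewrite raddf_sum /= -sum_msupp_mcoeff big_mkcond /=.
apply: eq_bigr => m _; case: ifP => dm; rewrite ?mcoeffZ ?mcoeffX.
  suff -> : ((m - d)%MM == k) = (m == (k + d)%MM) by [].
  by apply/idP/idP => /eqP E; rewrite -?E ?submK // E addmK.
case: eqP => [mk|_]; last by rewrite mulr0.
by rewrite mk lem_addl in dm.
Qed.

Lemma mrestrict_is_zmod_morphism P : zmod_morphism (mrestrict P).
Proof.
move=> p q; apply/mpolyP => k; rewrite !(mcoeffB, mcoeff_mrestrict).
by case: ifP; rewrite ?subr0.
Qed.

HB.instance Definition _ P :=
  GRing.isZmodMorphism.Build S S (mrestrict P) (mrestrict_is_zmod_morphism P).

Lemma mdivX_is_zmod_morphism d : zmod_morphism (mdivX d).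
Proof. by move=> p q; apply/mpolyP => k; rewrite !(mcoeffB, mcoeff_mdivX). Qed.

HB.instance Definition _ d :=
  GRing.isZmodMorphism.Build S S (mdivX d) (mdivX_is_zmod_morphism d).

Lemma mrestrictMX P w c :
  (forall m, P (m + w)%MM = P m) -> mrestrict P (c * 'X_[w]) = mrestrict P c * 'X_[w].
Proof.
move=> Pw; apply/mpolyP => k; rewrite mcoeff_mrestrict !mcoeffMXE.
have [wk|_] := boolP (w <= k)%MM; last by case: ifP.
by rewrite mcoeff_mrestrict -[in P k](submK wk) Pw.
Qed.

Lemma mrestrictMX_eq0 P w c :
  (forall m, ~~ P (m + w)%MM) -> mrestrict P (c * 'X_[w]) = 0.
Proof.
move=> PNw; apply/mpolyP => k; rewrite mcoeff_mrestrict mcoeffMXE mcoeff0.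
case: ifP => // Pk; case: ifP => // wk.
by have := PNw (k - w)%MM; rewrite submK ?Pk.
Qed.

Lemma mrestrict_freeMX (i : 'I_n) w c : w i = 0%N ->
  mrestrict (fun m => m i == 0%N) (c * 'X_[w]) = mrestrict (fun m => m i == 0%N) c * 'X_[w].
Proof. by move=> wi; apply: mrestrictMX => m; rewrite mnmDE wi addn0. Qed.

Lemma mrestrict_freeMX_eq0 (i : 'I_n) w c : (0 < w i)%N ->
  mrestrict (fun m => m i == 0%N) (c * 'X_[w]) = 0.
Proof. by move=> wi; apply: mrestrictMX_eq0 => m; rewrite mnmDE -lt0n ltn_addl. Qed.

Lemma mdivXMX d w c : (forall i, (d i == 0%N) || (w i == 0%N)) ->
  mdivX d (c * 'X_[w]) = mdivX d c * 'X_[w].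
Proof.
move=> dw; apply/mpolyP => k; rewrite mcoeff_mdivX !mcoeffMXE.
have -> : (w <= k + d)%MM = (w <= k)%MM.
  apply/mnm_lepP/mnm_lepP => wk i; have := wk i; rewrite mnmDE //.
    by case/orP: (dw i) => /eqP ->; rewrite ?addn0 // => _; rewrite leq0n.
  by move=> wki; apply: leq_trans wki (leq_addr _ _).
case: ifP => // wk; rewrite mcoeff_mdivX; congr (c@_ _); apply/mnmP => i.
by rewrite !(mnmDE, mnmBE); case/orP: (dw i) => /eqP ->; rewrite ?addn0 ?subn0.
Qed.

Lemma mdivXMXK d c : mdivX d (c * 'X_[d]) = c.
Proof. by apply/mpolyP => k; rewrite mcoeff_mdivX addmC mcoeffMX. Qed.

Lemma mpoly_split_var (i : 'I_n) p :
  p = mrestrict (fun m => m i == 0%N) p + mdivX U_(i) p * 'X_i.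
Proof.
apply/mpolyP => k; rewrite mcoeffD mcoeff_mrestrict mcoeffMXE.
have Uk : (U_(i) <= k)%MM = (k i != 0%N).
  apply/mnm_lepP/idP => [/(_ i)|ki j]; first by rewrite mnm1E eqxx lt0n.
  by rewrite mnm1E; case: eqP => [<-|]; rewrite ?lt0n.
rewrite Uk; case: eqP => [_|/eqP ki]; first by rewrite addr0.
by rewrite add0r mcoeff_mdivX submK // Uk.
Qed.

End MonomialOperators.

Section PathIdeals.
Variables (K : fieldType) (n : nat).
Local Notation S := {mpoly K[n]}.

Definition mwindow (a t : nat) : 'X_{1..n} :=
  [multinom ((a <= i) && (i < a + t) : nat) | i < n].

Lemma mwindowE a t (i : 'I_n) : mwindow a t i = ((a <= i) && (i < a + t))%N.
Proof. exact: mnmE. Qed.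

Lemma xvE (i : 'I_n) : @xv K n i.+1 = 'X_i.
Proof. by rewrite /xv (insubT (fun k => (k < n)%N) (ltn_ord i)). Qed.

Lemma upath_mwindow t a : (a + t <= n)%N -> @upath K n t a.+1 = 'X_[mwindow a t].
Proof.
elim: t => [|t IHt] atn.
  rewrite /upath addn0 big_geq // -mpolyX0; congr 'X_[_].
  by apply/mnmP => i; rewrite mwindowE mnm0E; lia.
have at_n : (a + t < n)%N by rewrite -addnS.
have -> : @upath K n t.+1 a.+1 = @upath K n t a.+1 * @xv K n (a + t).+1.
  by rewrite /upath addnS big_nat_recr ?leq_addr.
rewrite IHt ?(ltnW at_n) // (xvE (Ordinal at_n)) -mpolyXD; congr 'X_[_].
by apply/mnmP => i; rewrite mnmDE !mwindowE mnm1E -[Ordinal _ == i]/(a + t == i)%N; lia.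
Qed.

Definition upath_gen t m (f : S) : Prop :=
  exists2 i, (1 <= i <= m.+1 - t)%N & f = @upath K n t i.

Lemma pathI_mono t m m' f : (m <= m')%N -> @pathI K n t m f -> @pathI K n t m' f.
Proof.
move=> mm'; apply: ideal_gen_sub => g [i im ->]; apply: ideal_gen_mem.
by exists i => //; lia.
Qed.

Lemma pathI_eq0 t m f : (m < t)%N -> @pathI K n t m f -> f = 0.
Proof. by move=> mt; apply: ideal_gen_eq0 => g [i im _]; lia. Qed.

End PathIdeals.

Section ColonByLastGenerator.
Variables (K : fieldType) (n t : nat).
Hypothesis t_lt_n : (t < n)%N.
Local Notation J := (@pathI K n t (n - 1)).
Local Notation L := (@pathI K n t (n - t - 1)).
Local Notation u := (@upath K n t (n - t + 1)).
Local Notation x := (@xv K n (n - t)).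

Fact xvar_subproof : (n - t - 1 < n)%N. Proof. lia. Qed.
Let xi : 'I_n := Ordinal xvar_subproof.

Lemma xv_subnE : x = 'X_xi.
Proof. by rewrite -xvE; congr xv; rewrite /=; lia. Qed.

Lemma upath_lastE : u = 'X_[mwindow n (n - t) t].
Proof. by rewrite addn1 upath_mwindow //; lia. Qed.

Let restrict_xfree := @mrestrict K n (fun m : 'X_{1..n} => m xi == 0%N).

Lemma restrict_xfree_upath_gen g : upath_gen t (n - 1) g ->
  (ideal_gen (upath_gen t (n - t - 1)) g
     /\ forall c, restrict_xfree (c * g) = restrict_xfree c * g)
  \/ forall c, restrict_xfree (c * g) = 0.
Proof.
case=> [[//|a] ia ->].
have ua : @upath K n t a.+1 = 'X_[mwindow n a t] by apply: upath_mwindow; lia.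
have [keep|kill] := leqP (a.+1 + t) (n - t); [left; split | right] => [|c|c].
- by apply: ideal_gen_mem; exists a.+1 => //; lia.
- by rewrite ua; apply: mrestrict_freeMX; rewrite mwindowE /=; lia.
- by rewrite ua; apply: mrestrict_freeMX_eq0; rewrite mwindowE /=; lia.
Qed.

Let divide_u := @mdivX K n (mwindow n (n - t) t).

Lemma divide_u_upath_gen g : upath_gen t (n - t - 1) g ->
  (ideal_gen (upath_gen t (n - t - 1)) g
     /\ forall c, divide_u (c * g) = divide_u c * g)
  \/ forall c, divide_u (c * g) = 0.
Proof.
move=> Lg; left; split; first exact: ideal_gen_mem.
case: Lg => [[//|a] ia ->] c; rewrite upath_mwindow; last by lia.
by apply: mdivXMX => i; rewrite !mwindowE; lia.
Qed.

Lemma colon_upath_sub s a :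
  ideal_colon (ideal_pow J s) u a -> ideal_sum (ideal_pow L s) (ideal_princ x) a.
Proof.
move=> Jau.
have xfree_u : restrict_xfree (a * u) = restrict_xfree a * u.
  by rewrite upath_lastE; apply: mrestrict_freeMX; rewrite mwindowE /=; lia.
have Lau : ideal_pow L s (restrict_xfree a * u).
  by rewrite -xfree_u; apply: ideal_pow_additive restrict_xfree_upath_gen Jau.
have La : ideal_pow L s (restrict_xfree a).
  rewrite upath_lastE in Lau; rewrite -(mdivXMXK (mwindow n (n - t) t) (restrict_xfree a)).
  exact: ideal_pow_additive divide_u_upath_gen Lau.
rewrite (mpoly_split_var xi a); apply: ideal_genD; first exact: ideal_sum_meml.
by apply/ideal_genMl/ideal_sum_memr; rewrite xv_subnE; apply: ideal_gen_mem.
Qed.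

Lemma pow_sub_colon_upath s a :
  ideal_pow L s a -> ideal_colon (ideal_pow J s) u a.
Proof.
move=> La; apply: ideal_pow_sub_colon; apply: ideal_pow_mono La => g.
by apply: pathI_mono; lia.
Qed.

Lemma colon_upath_plus_xv s :
  ideal_eq (ideal_sum (ideal_colon (ideal_pow J s) u) (ideal_princ x))
           (ideal_sum (ideal_pow L s) (ideal_princ x)).
Proof.
move=> f; split; apply: ideal_sum_subl => g; first exact: colon_upath_sub.
by move/pow_sub_colon_upath/ideal_sum_meml.
Qed.

End ColonByLastGenerator.

Theorem lemma3p7 (K : fieldType) (n t s : nat) :
  (1 <= t)%N -> (t + 1 <= n)%N -> (2 <= s)%N ->
  ideal_eq
    (ideal_sum
       (ideal_colon (ideal_pow (@pathI K n t (n - 1)) s) (@upath K n t (n - t + 1)))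
       (ideal_princ (@xv K n (n - t))))
    (ideal_sum (ideal_pow (@pathI K n t (n - t - 1)) s) (ideal_princ (@xv K n (n - t))))
  /\ ((n <= 2 * t)%N ->
      ideal_eq (@pathI K n t (n - t - 1)) (ideal_princ (0 : {mpoly K[n]})) /\
      ideal_eq
        (ideal_sum
           (ideal_colon (ideal_pow (@pathI K n t (n - 1)) s) (@upath K n t (n - t + 1)))
           (ideal_princ (@xv K n (n - t))))
        (ideal_princ (@xv K n (n - t)))).
Proof.
move=> _ t1_le_n s_ge2; have t_lt_n : (t < n)%N by rewrite -addn1.
have colonE := @colon_upath_plus_xv K n t t_lt_n s.
split=> // n_le_2t.
have L0 g : @pathI K n t (n - t - 1) g -> g = 0 by apply: pathI_eq0; lia.
split=> f; split.
- by move/L0 ->; apply: ideal_gen0.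
- by move/ideal_gen_eq0 => -> //; apply: ideal_gen0.
- move/colonE; apply: ideal_gen_sub => g [Lg|//].
  by rewrite (ideal_pow_eq0 L0 (ltnW s_ge2) Lg); apply: ideal_gen0.
- exact: ideal_sum_memr.
Qed.
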